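(* Let $p>q>0$ be relatively prime integers with Hirzebruch–Jung continued fraction expansion $p/q=[a_1,\ldots,a_n]$, $a_i\geq 2$, and let \[ S = \sum_{i:\,a_i>3} (a_i-3). \] If $S > 2p/9$, then at most two of the $a_i$ are greater than $3$.
   Context: The Hirzebruch–Jung continued fraction $[a_1,\ldots,a_n]$ denotes $a_1 - 1/(a_2 - 1/(\cdots - 1/a_n))$; it is computed recursively by $p_1/q_1=p/q$, $p_i/q_i = a_i - q_{i+1}/p_{i+1}$ with $p_{i+1}=q_i$ and $0<q_{i+1}<p_{i+1}$. *)

From mathcomp Require Import all_boot all_order all_algebra.
Set Implicit Arguments. Unset Strict Implicit. Unset Printing Implicit Defensive.
Import Order.TTheory GRing.Theory Num.Theory.
Local Open Scope ring_scope.

(* Hirzebruch-Jung continued fraction [a_1,...,a_n] = a_1 - 1/(a_2 - 1/(... - 1/a_n)),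
   evaluated in rat.  The empty list is given the (irrelevant) value 0. *)
Fixpoint hj (s : seq nat) : rat :=
  match s with
  | [::] => 0
  | [:: a] => a%:R
  | a :: t => a%:R - (hj t)^-1
  end.

Definition excess (s : seq nat) : nat := (\sum_(a <- s | 3 < a) (a - 3))%N.

(* The numerator p of [a_1,...,a_n] in lowest terms is the continuant
   K(a_1,...,a_n) = a_1 K(a_2,...,a_n) - K(a_3,...,a_n), and since the
   continuants decrease along the tail, K(a_1,...,a_n) >= (a_1 - 1) K(a_2,...,a_n),
   so p >= prod_i (a_i - 1).  Write the m entries a_i > 3 as a_i = 4 + d_i;
   Weierstrass' product inequality gives
   prod (3 + d_i) >= 3^(m-1) (3 + sum d_i) >= 9 (m + sum d_i) = 9 S once m >= 3.
   Hence p >= 9 S, contradicting 9 S > 2 p. *)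
From mathcomp Require Import all_boot all_order all_algebra.
From mathcomp Require Import zify.
Set Implicit Arguments. Unset Strict Implicit. Unset Printing Implicit Defensive.
Import Order.TTheory GRing.Theory Num.Theory.
Local Open Scope ring_scope.

Lemma expn_count_mul_le_prod (I : Type) (r : seq I) (P : pred I) (F : I -> nat) (b : nat) :
  (b ^ count P r * (b + \sum_(i <- r | P i) F i) <= b * \prod_(i <- r | P i) (b + F i))%N.
Proof.
elim: r => [|i r IHr]; first by rewrite !big_nil expn0 mul1n addn0 muln1.
rewrite !big_cons /=; case: (P i) => //=.
set c := count P r; set S := (\sum_(j <- r | P j) F j)%N.
apply: (@leq_trans ((b + F i) * (b ^ c * (b + S)))).
  by rewrite add1n expnS; set e := (b ^ c)%N; nia.
by rewrite [leqRHS]mulnCA leq_mul2l IHr orbT.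
Qed.

Lemma excess_le_prod_pred (a : seq nat) :
  all (fun x => 2 <= x)%N a -> (3 <= count (fun x => 3 < x) a)%N ->
  (9 * excess a <= \prod_(x <- a) (x - 1))%N.
Proof.
move=> a2 big3; set m := count _ a in big3 *.
set D := (\sum_(x <- a | 3 < x) (x - 4))%N.
have excessE : excess a = (m + D)%N.
  rewrite /excess /m -sum1_count -big_split /=.
  by apply: eq_bigr => x x3; lia.
have prod_big : (3 ^ m * (3 + D) <= 3 * \prod_(x <- a | 3 < x) (x - 1))%N.
  rewrite (eq_bigr (fun x => 3 + (x - 4))%N); last by move=> x x3; lia.
  exact: expn_count_mul_le_prod.
have prod_le : (\prod_(x <- a | 3 < x) (x - 1) <= \prod_(x <- a) (x - 1))%N.
  rewrite big_mkcond /= big_seq_cond [leqRHS]big_seq_cond.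
  apply: leq_prod => x /andP[xa _]; case: ifP => // _.
  by move/allP/(_ x xa): a2; lia.
have pow_big : (27 * (m + D) <= 3 ^ m * (3 + D))%N.
  have [k ->] : exists k, m = (k + 3)%N by exists (m - 3)%N; lia.
  have := ltn_expl k (isT : (1 < 3)%N); rewrite expnD; nia.
rewrite excessE; lia.
Qed.

Fixpoint hj_frac (s : seq nat) : nat * nat :=
  if s is a :: t then let f := hj_frac t in (a * f.1 - f.2, f.1)%N else (1, 0)%N.

Lemma hj_frac_cons (a : nat) (t : seq nat) :
  hj_frac (a :: t) = (a * (hj_frac t).1 - (hj_frac t).2, (hj_frac t).1)%N.
Proof. by []. Qed.

Lemma hj_frac_lt (s : seq nat) :
  all (fun x => 2 <= x)%N s -> ((hj_frac s).2 < (hj_frac s).1)%N.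
Proof. by elim: s => //= a t IHt /andP[a2 /IHt]; nia. Qed.

Lemma coprime_hj_frac (s : seq nat) :
  all (fun x => 2 <= x)%N s -> coprime (hj_frac s).1 (hj_frac s).2.
Proof.
elim: s => //= a t IHt /andP[a2 t2]; move: (IHt t2) (hj_frac_lt t2).
set x := (hj_frac t).1; set y := (hj_frac t).2 => cop_xy y_lt_x.
have -> : (a * x - y = (a - 1) * x + (x - y))%N by nia.
rewrite coprime_sym /coprime gcdnMDl.
have xE : x = ((x - y) + y)%N by lia.
have gcd_sub : gcdn x (x - y) = gcdn x y.
  by rewrite {1 3}xE gcdnC gcdnDl [RHS]gcdnC gcdnDr gcdnC.
by rewrite gcd_sub.
Qed.

Lemma prod_pred_le_hj_frac (s : seq nat) :
  all (fun x => 2 <= x)%N s -> (\prod_(x <- s) (x - 1) <= (hj_frac s).1)%N.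
Proof.
elim: s => [|a t IHt] /=; first by rewrite big_nil.
case/andP=> a2 t2; rewrite big_cons.
move: (IHt t2) (hj_frac_lt t2); set x := (hj_frac t).1; set y := (hj_frac t).2.
nia.
Qed.

Lemma hj_fracE (s : seq nat) :
  all (fun x => 2 <= x)%N s -> s != [::] -> hj s = (hj_frac s).1%:R / (hj_frac s).2%:R.
Proof.
elim: s => // a t IHt /andP[a2 t2] _.
case: t => [|b t] in IHt t2 *; first by rewrite /= muln1 subn0 divr1.
rewrite [hj _]/= -/(hj (b :: t)) IHt // (hj_frac_cons a) invf_div.
move: (@hj_frac_lt (b :: t) t2); case: (hj_frac (b :: t)) => x y /= y_lt_x.
have x0 : x%:R != 0 :> rat by rewrite pnatr_eq0 -lt0n (leq_ltn_trans _ y_lt_x).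
rewrite natrB ?natrM; last by nia.
by rewrite mulrBl mulfK.
Qed.

Lemma coprime_frac_inj (p q x y : nat) :
  (0 < q)%N -> (0 < y)%N -> coprime p q -> coprime x y ->
  p%:R / q%:R = x%:R / y%:R :> rat -> p = x.
Proof.
move=> q0 y0 cop_pq cop_xy /(congr1 numq).
rewrite !pmulrn !coprimeq_num // !gtr0_sg ?ltz_nat // !mul1r.
by case.
Qed.

Theorem mainTheorem8 (p q : nat) (a : seq nat) :
  (0 < q)%N -> (q < p)%N -> coprime p q ->
  a != [::] -> all (fun x => 2 <= x)%N a ->
  hj a = (p%:R / q%:R : rat) ->
  (9 * excess a > 2 * p)%N ->
  (count (fun x => 3 < x)%N a <= 2)%N.
Proof.
move=> q0 qp cop_pq a_nil a2 hjE excess_gt; rewrite leqNgt; apply/negP => big3.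
have y0 : (0 < (hj_frac a).2)%N.
  case: a a_nil a2 {hjE excess_gt big3} => // b t _ /andP[_ t2] /=.
  exact: leq_ltn_trans (hj_frac_lt t2).
have pE : p = (hj_frac a).1.
  by apply: coprime_frac_inj q0 y0 cop_pq (coprime_hj_frac a2) _; rewrite -hjE hj_fracE.
have := excess_le_prod_pred a2 big3; have := prod_pred_le_hj_frac a2.
lia.
Qed.
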